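(* Let $p$ be an odd prime, $r\ge3$ with $p\nmid r$, $D=\mathrm{D}_{2r}$, and let $G=V\rtimes_\psi D$ with $V=\mathbb{Z}_p^d$ and $\psi:D\to\mathrm{GL}(V)$ irreducible and non-trivial. Let $A=\mathrm{Aut}(G)$, $N=\mathrm{N}_A(D)$, and define the homomorphism $\kappa:N\to\mathrm{Aut}(D)$ by $f\mapsto f|_D$. Then $\ker(\kappa)\cong\mathrm{End}_D(V)^\times$ and $\mathrm{im}(\kappa)=\mathrm{Aut}(D)_\psi$, where $\mathrm{Aut}(D)_\psi=\{\sigma\in\mathrm{Aut}(D):\psi\circ\sigma\cong\psi\}$.
   Context: $V\rtimes_\psi D$ is the semidirect product in which $D$ acts on $V=\mathbb{F}_p^d$ via $\psi$. $\mathrm{N}_A(D)=\{f\in A:f(D)=D\}$. $\mathrm{End}_D(V)$ is the ring of $\mathbb{F}_pD$-module endomorphisms of $V$ and $\mathrm{End}_D(V)^\times$ its unit group. *)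

From HB Require Import structures.
From mathcomp Require Import all_boot all_order all_algebra all_fingroup all_solvable.
From mathcomp Require Import mxrepresentation mxabelem.
Set Implicit Arguments. Unset Strict Implicit. Unset Printing Implicit Defensive.
Import GRing.Theory.
Local Open Scope group_scope.

(* D = 'D_(r.*2), the dihedral group of order 2r (extremal.v).
   V = 'rV['F_p]_(n.+1) (additive group), D acting on the right via
   v |-> v *m rho x, i.e. the group action 'MR rho of mxabelem.v. *)

Section Defs.
Variables (p r n : nat).
Variable rho : mx_representation 'F_p 'D_(r.*2) n.+1.

Definition sdG : finGroupType := sdprod_by (mx_repr_groupAction rho).

Definition Dhat : {set sdG} := sdpair2 (mx_repr_groupAction rho) @* 'D_(r.*2).

Definition NA : {set {perm sdG}} := [set f in Aut [set: sdG] | f @: Dhat == Dhat].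

(* f in N restricts to a in Aut(D), i.e. kappa f = a *)
Definition kappa_rel (f : {perm sdG}) (a : {perm gsort 'D_(r.*2)}) : bool :=
  [forall x in 'D_(r.*2),
     f (sdpair2 (mx_repr_groupAction rho) x) == sdpair2 (mx_repr_groupAction rho) (a x)].

Definition ker_kappa : {set {perm sdG}} := [set f in NA | kappa_rel f 1].

Definition im_kappa : {set {perm gsort 'D_(r.*2)}} :=
  [set a in Aut 'D_(r.*2) | [exists f in NA, kappa_rel f a]].

Definition EndD_units : {set {'GL_n.+1['F_p]}} :=
  [set g : {'GL_n.+1['F_p]} | centgmx rho (GLval g)].

(* Aut(D)_psi = { s in Aut(D) : psi o s ~ psi }; similarity of representations
   written out as in mx_rsim *)
Definition AutD_psi : {set {perm gsort 'D_(r.*2)}} :=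
  [set s in Aut 'D_(r.*2) |
     [exists B : 'M['F_p]_n.+1,
        row_free B && [forall x in 'D_(r.*2), (rho (s x) *m B == B *m rho x)%R]]].

End Defs.

From HB Require Import structures.
From mathcomp Require Import all_boot all_order all_algebra all_fingroup all_solvable.
From mathcomp Require Import mxrepresentation mxabelem.
Set Implicit Arguments. Unset Strict Implicit. Unset Printing Implicit Defensive.
Import GRing.Theory.
Local Open Scope group_scope.

(* Since p does not divide |D|, V is the normal Sylow p-subgroup of G = V ⋊ D,
   hence characteristic, so every automorphism f of G preserves V.  On V it is
   additive, hence F_p-linear, v ↦ vT; if moreover f maps D onto D by some
   σ ∈ Aut(D), then applying f to v^d = vψ(d) gives ψ(d)T = Tψ(σ d), i.e. T is
   an isomorphism ψ ≅ ψ∘σ, and f is (v, d) ↦ (vT, σ d).  Conversely every such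
   pair (T, σ) defines an automorphism normalising D.  Taking σ = 1 identifies
   ker κ with End_D(V)^×, and im κ consists of the σ for which such a T exists. *)

Lemma Fp_additive_mulmx p m k (phi : 'rV['F_p]_m -> 'rV['F_p]_k) :
    {morph phi : x y / (x + y)%R} ->
  forall x, phi x = (x *m \matrix_(i < m) phi (delta_mx 0 i))%R.
Proof.
move=> phiD.
have phi0 : phi 0%R = 0%R by apply: (@addrI _ (phi 0%R)); rewrite -phiD !addr0.
have phiZ c x : phi (c *: x)%R = (c *: phi x)%R.
  rewrite -[c]natr_Zp !scaler_nat.
  by elim: (nat_of_ord c) => [|j IH]; rewrite ?mulr0n ?phi0 // !mulrS phiD IH.
move=> x; rewrite mulmx_sum_row {1}[x]row_sum_delta (big_morph phi phiD phi0).
by apply: eq_bigr => i _; rewrite phiZ rowK.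
Qed.

Definition intertwines (F : pzRingType) (T : Type) n (rho1 rho2 : T -> 'M[F]_n)
    (B : 'M[F]_n) :=
  forall x, (rho1 x *m B = B *m rho2 x)%R.

Lemma intertwinesV (F : fieldType) (T : Type) n (rho1 rho2 : T -> 'M[F]_n)
    (B : 'M[F]_n) :
  B \in unitmx -> intertwines rho1 rho2 B -> intertwines rho2 rho1 (invmx B).
Proof.
by move=> uB cB x; rewrite -[rho2 x](mulKmx uB) -cB -mulmxA mulmxK.
Qed.

Section Twist.

Variables (p n : nat) (gT : finGroupType).
Variable rho : mx_representation 'F_p [set: gT] n.+1.

Local Notation sdT := (sdprod_by (mx_repr_groupAction rho)).
Local Notation v := (sdpair1 (mx_repr_groupAction rho)).
Local Notation d := (sdpair2 (mx_repr_groupAction rho)).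
Implicit Types (u w : sdT) (g h : {'GL_n.+1['F_p]}) (s t : {perm gT}).

Lemma sdprodM_fst u w : (u * w).1 = u.1 * w.1. Proof. by []. Qed.

Lemma sdprodM_snd u w : (u * w).2 = (u.2 *m rho w.1 + w.2)%R.
Proof. by rewrite /= mx_repr_actE ?inE. Qed.

Lemma sdpair1_fst x : (v x).1 = 1. Proof. by rewrite /= val_insubd !inE. Qed.
Lemma sdpair1_snd x : (v x).2 = x. Proof. by rewrite /= val_insubd !inE. Qed.
Lemma sdpair2_fst a : (d a).1 = a. Proof. by rewrite /= val_insubd !inE. Qed.
Lemma sdpair2_snd a : (d a).2 = 0%R. Proof. by rewrite /= val_insubd !inE. Qed.

Definition sdprodE :=
  (sdprodM_fst, sdprodM_snd, sdpair1_fst, sdpair1_snd, sdpair2_fst, sdpair2_snd).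

Lemma sdprod_eq u w : u.1 = w.1 -> u.2 = w.2 -> u = w.
Proof.
by move=> e1 e2; apply: val_inj; case: u w e1 e2 => [[? ?] ?] [[? ?] ?] /= -> ->.
Qed.

(* u : sdT is the pair (a, x) standing for d a * v x (see sdpairE). *)
Definition sdtwist_fun g s u : sdT := insubd u (s u.1, (u.2 *m GLval g)%R).

Lemma sdtwist_fun_val g s u :
  val (sdtwist_fun g s u) = (s u.1, (u.2 *m GLval g)%R).
Proof. by rewrite val_insubd !inE. Qed.

Fact sdtwist_fun_inj g s : injective (sdtwist_fun g s).
Proof.
move=> u w /(congr1 val); rewrite !sdtwist_fun_val => -[/perm_inj e1 e2].
by apply: sdprod_eq => //; apply: (can_inj (mulmxK (GL_unitmx g))).
Qed.

Definition sdtwist g s : {perm sdT} := perm (@sdtwist_fun_inj g s).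

Lemma sdtwist_fst g s u : (sdtwist g s u).1 = s u.1.
Proof. by rewrite permE /= sdtwist_fun_val. Qed.

Lemma sdtwist_snd g s u : (sdtwist g s u).2 = (u.2 *m GLval g)%R.
Proof. by rewrite permE /= sdtwist_fun_val. Qed.

Lemma sdtwist_sdpair2 g s a : sdtwist g s (d a) = d (s a).
Proof. by apply: sdprod_eq; rewrite !(sdtwist_fst, sdtwist_snd, sdprodE) ?mul0mx. Qed.

Lemma sdtwist_mul g h s t : sdtwist g s * sdtwist h t = sdtwist (g * h) (s * t).
Proof.
apply/permP => u; apply: sdprod_eq.
  by rewrite permM !sdtwist_fst permM.
by rewrite permM !sdtwist_snd GL_MxE mulmxA.
Qed.

Lemma sdtwist_injl s : injective (sdtwist^~ s).
Proof.
move=> g h e; apply: val_inj; apply/row_matrixP => i.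
have := congr1 (fun f : {perm sdT} => (f (v (delta_mx 0 i)%R)).2) e.
by rewrite /= !sdtwist_snd sdpair1_snd -!rowE.
Qed.

Definition sdtwist1 g := sdtwist g 1.

Fact sdtwist1_morphM :
  {in [set: {'GL_n.+1['F_p]}] &, {morph sdtwist1 : g h / g * h}}.
Proof. by move=> g h _ _; rewrite /sdtwist1 sdtwist_mul mulg1. Qed.

Canonical sdtwist1_morphism := Morphism sdtwist1_morphM.

Lemma injm_sdtwist1 : 'injm sdtwist1_morphism.
Proof. by apply/injmP => g h _ _; apply: sdtwist_injl. Qed.

Lemma sdtwist_Aut g s : s \in Aut [set: gT] -> intertwines rho (rho \o s) g ->
  sdtwist g s \in Aut [set: sdT].
Proof.
move=> /Aut_morphic/morphicP sM cg; rewrite inE; apply/andP; split.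
  by apply/subsetP => u; rewrite !inE.
apply/morphicP => u w _ _; apply: sdprod_eq.
  by rewrite !(sdprodE, sdtwist_fst) sM ?inE.
by rewrite !(sdprodE, sdtwist_fst, sdtwist_snd) mulmxDl -!mulmxA cg.
Qed.

Lemma sdtwist_im_sdpair2 g s :
  sdtwist g s @: (d @* [set: gT]) = d @* [set: gT].
Proof.
rewrite morphimEdom -imset_comp (eq_imset _ (sdtwist_sdpair2 g s)) imset_comp.
by rewrite im_perm_on //; apply/subsetP => x; rewrite inE.
Qed.

Section Coprime.

Hypotheses (p_pr : prime p) (p'G : p^'.-group [set: gT]).

Lemma sdpair1_pHall : p.-Hall([set: sdT]) (v @* [set: 'rV['F_p]_n.+1]).
Proof.
rewrite /pHall subsetT morphim_pgroup ?(abelem_pgroup (mx_Fp_abelem _ _ p_pr)) //=.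
by rewrite -(index_sdprod (sdprod_sdpair _)) card_injm ?injm_sdpair2.
Qed.

Lemma sdpair1_char : v @* [set: 'rV['F_p]_n.+1] \char [set: sdT].
Proof.
have [nsVG _ _ _ _] := sdprod_context (sdprod_sdpair (mx_repr_groupAction rho)).
by rewrite -(normal_Hall_pcore sdpair1_pHall nsVG) pcore_char.
Qed.

Lemma Aut_sdpair1 f : f \in Aut [set: sdT] ->
  exists g, forall x, f (v x) = v (x *m GLval g)%R.
Proof.
move=> Af; have fM := morphicP (Aut_morphic Af).
have fV x : f (v x) \in v @* [set: 'rV['F_p]_n.+1].
  have /andP[_ /forall_inP/(_ f Af)/subsetP] := sdpair1_char; apply.
  by rewrite imset_f ?mem_morphim ?inE.
pose phi x := (f (v x)).2.
have fvE x : f (v x) = v (phi x).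
  by rewrite /phi; have /morphimP[y _ _ ->] := fV x; rewrite sdpair1_snd.
have phiD : {morph phi : x y / (x + y)%R}.
  move=> x y; have vD : v (x + y)%R = v x * v y.
    by apply: sdprod_eq; rewrite !sdprodE ?mulg1 // repr_mx1 mulmx1.
  by rewrite /phi vD fM ?inE // !fvE !sdprodE repr_mx1 mulmx1.
have phi0 : phi 0%R = 0%R by apply: (@addrI _ (phi 0%R)); rewrite -phiD !addr0.
have [T phiT] : exists T, forall x, phi x = (x *m T)%R.
  by eexists; apply: Fp_additive_mulmx phiD.
have T_inj (x : 'rV_n.+1) : (x *m T = 0)%R -> x = 0%R.
  rewrite -phiT => phix0.
  have /perm_inj : f (v x) = f (v 0%R) by rewrite !fvE phix0 phi0.
  by move/(congr1 (fun u : sdT => u.2)); rewrite !sdpair1_snd.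
have uT : T \is a GRing.unit by rewrite -row_free_unit inj_row_free.
by exists (FinRing.Unit uT) => x; rewrite fvE phiT.
Qed.

Lemma Aut_sdtwistP f s :
    f \in Aut [set: sdT] -> (forall a, f (d a) = d (s a)) ->
  exists2 g : {'GL_n.+1['F_p]},
    intertwines rho (rho \o s) (GLval g) & f = sdtwist g s.
Proof.
move=> Af fd; have [g fv] := Aut_sdpair1 Af.
have fM := morphicP (Aut_morphic Af).
exists g; last first.
  apply/permP => u; rewrite [in LHS](sdpairE u) fM ?inE // fd fv.
  apply: sdprod_eq; rewrite !(sdprodE, sdtwist_fst, sdtwist_snd) ?mulg1 //.
  by rewrite mul0mx add0r.
move=> a; apply/row_matrixP => i; rewrite !rowE !mulmxA.
have := congr1 f (sdpair_act _ (in_setT (delta_mx 0 i)%R) (in_setT a)).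
rewrite -(autmE Af) morphJ ?inE //= autmE fd !fv /= mx_repr_actE ?inE //.
rewrite -sdpair_act ?inE //= mx_repr_actE ?inE //.
by move/(injmP (injm_sdpair1 _)); apply; rewrite inE.
Qed.

End Coprime.

End Twist.

Lemma dihedral_p'group p r : prime p -> odd p -> 1 < r -> ~~ (p %| r) ->
  p^'.-group 'D_(r.*2).
Proof.
move=> p_pr p_odd r_gt1 p'r; rewrite /pgroup card_dihedral // p'natE // -mul2n.
rewrite Euclid_dvdM // (negbTE p'r) orbF dvdn_prime2 //.
by apply: contraTneq p_odd => ->.
Qed.

Section Kappa.

Variables (p r n : nat) (rho : mx_representation 'F_p 'D_(r.*2) n.+1).
Hypotheses (p_pr : prime p) (p'D : p^'.-group 'D_(r.*2)).

Local Notation d := (sdpair2 (mx_repr_groupAction rho)).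
Local Notation twist := (@sdtwist p n _ rho).
Implicit Types (f : {perm sdG rho}) (s : {perm gsort 'D_(r.*2)}) (g : {'GL_n.+1['F_p]}).

Lemma kappa_relP f s :
  reflect (forall a, f (d a) = d (s a)) (kappa_rel f s).
Proof.
apply: (iffP forall_inP) => [fd a | fd a _]; last by rewrite fd.
by apply/eqP/fd; rewrite inE.
Qed.

Lemma NA_Aut f : f \in NA rho -> f \in Aut [set: sdG rho].
Proof. by rewrite inE => /andP[]. Qed.

Lemma sdtwist_NA g s :
  s \in Aut 'D_(r.*2) -> intertwines rho (rho \o s) (GLval g) -> twist g s \in NA rho.
Proof. by move=> As cg; rewrite inE sdtwist_Aut //= sdtwist_im_sdpair2. Qed.

Lemma EndD_units_group_set : group_set (EndD_units rho).
Proof.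
apply/group_setP; split=> [|g h]; rewrite !inE.
  by apply/centgmxP => x _; rewrite GL_1E mul1mx mulmx1.
move=> /centgmxP cg /centgmxP ch.
by apply/centgmxP => x Dx; rewrite GL_MxE -mulmxA ch // !mulmxA cg.
Qed.

Canonical EndD_units_group := Group EndD_units_group_set.

Lemma ker_kappaE : ker_kappa rho = sdtwist1_morphism rho @* EndD_units rho.
Proof.
rewrite morphimEsub ?subsetT //; apply/setP => f; rewrite inE.
apply/andP/imsetP => [[fN /kappa_relP fd] | [g Eg ->]].
  have [g cg ->] := Aut_sdtwistP p_pr p'D (NA_Aut fN) fd.
  exists g => //; rewrite inE; apply/centgmxP => x _.
  by rewrite cg /= perm1.
have cg : intertwines rho (rho \o (1 : {perm _})) (GLval g).
  by move: Eg; rewrite inE => /centgmxP cg x; rewrite /= perm1 cg ?inE.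
split; first exact: sdtwist_NA (group1 _) cg.
by apply/kappa_relP => a; rewrite sdtwist_sdpair2.
Qed.

Lemma im_kappaE : im_kappa rho = AutD_psi rho.
Proof.
apply/setP => s; rewrite !inE; apply: andb_id2l => As.
apply/existsP/existsP => [[f /andP[fN /kappa_relP fd]] | ].
  have [g cg _] := Aut_sdtwistP p_pr p'D (NA_Aut fN) fd.
  exists (GLval g^-1); rewrite row_free_unit (GL_unitmx g^-1) /=.
  by apply/forall_inP => x _; apply/eqP; apply: intertwinesV (GL_unitmx g) cg x.
case=> B /andP[fB /forall_inP cB].
have uB : B \is a GRing.unit by rewrite -row_free_unit.
pose g : {'GL_n.+1['F_p]} := (FinRing.Unit uB)^-1.
have cg : intertwines rho (rho \o s) (GLval g).
  by apply: (intertwinesV uB) => x; apply/eqP/cB; rewrite inE.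
exists (twist g s); rewrite sdtwist_NA ?inE //.
by apply/kappa_relP => a; rewrite sdtwist_sdpair2.
Qed.

End Kappa.

Local Close Scope group_scope.

Theorem lemma5p3 (p r n : nat) (rho : mx_representation 'F_p 'D_(r.*2) n.+1) :
  prime p -> odd p -> 3 <= r -> ~~ (p %| r) ->
  mx_irreducible rho ->
  [exists x in 'D_(r.*2), (rho x != 1%:M)%R] ->
  (ker_kappa rho \isog EndD_units rho) /\ im_kappa rho = AutD_psi rho.
Proof.
move=> p_pr p_odd r_ge3 p'r _ _.
have p'D := dihedral_p'group p_pr p_odd (ltnW r_ge3) p'r.
split; last exact: im_kappaE p_pr p'D.
rewrite (ker_kappaE rho p_pr p'D) isog_sym.
by apply: sub_isog; [apply: subsetT | apply: injm_sdtwist1].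
Qed.
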